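(* Let $\alpha=[a_1,a_2,\dots]\in(0,1)$ be irrational and suppose there is $C\in\mathbb{R}$ with $|a_n|\le C$ for all $n\in\mathbb{N}$. Then for every nonnegative subadditive function $F:W_\alpha\to\mathbb{R}$ the limit $\lim_{|w|\to\infty,\,w\in W_\alpha}\frac{F(w)}{|w|}$ exists.
   Context: $\alpha=[a_1,a_2,\dots]$ denotes the continued fraction expansion $\alpha=1/(a_1+1/(a_2+\cdots))$. For $\theta\in[0,1)$, $v_{\alpha,\theta}$ is the two-sided infinite word over $\{0,1\}$ with letters $v_{\alpha,\theta}(n)=\chi_{[1-\alpha,1)}(n\alpha+\theta\bmod1)$; $W_\alpha$ is the set of all finite non-empty subwords of the words $v_{\alpha,\theta}$, $\theta\in[0,1)$, and $|w|$ is the length of $w$. A function $F:W_\alpha\to\mathbb{R}$ is subadditive if $F(ab)\le F(a)+F(b)$ for all $a,b\in W_\alpha$ with $ab\in W_\alpha$. The statement $\lim_{|w|\to\infty,\,w\in W_\alpha}G(w)=a$ means: for every $\epsilon>0$ there is $n_\epsilon$ with $|G(w)-a|\le\epsilon$ for all $w\in W_\alpha$ with $|w|\ge n_\epsilon$; the limit exists if this holds for some real $a$. *)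

From Stdlib Require Import Reals Lra Lia ZArith List.
Open Scope R_scope.

Definition floorZ (x : R) : Z := (up x - 1)%Z.
Definition fracR (x : R) : R := x - IZR (floorZ x).

(* Continued fraction alpha = 1/(a_1 + 1/(a_2 + ...)), via the Gauss map:
   cf_rem alpha 0 = alpha, cf_rem alpha (k+1) = frac(1 / cf_rem alpha k),
   cf_digit alpha k = floor(1 / cf_rem alpha k) = a_{k+1}. *)
Fixpoint cf_rem (alpha : R) (k : nat) : R :=
  match k with
  | O => alpha
  | S k' => fracR (/ cf_rem alpha k')
  end.
Definition cf_digit (alpha : R) (k : nat) : Z := floorZ (/ cf_rem alpha k).

Definition irrational (x : R) : Prop :=
  ~ exists p q : Z, q <> 0%Z /\ x = IZR p / IZR q.

Definition sturm (alpha theta : R) (n : Z) : bool :=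
  if Rle_dec (1 - alpha) (fracR (IZR n * alpha + theta)) then true else false.

Definition in_W (alpha : R) (w : list bool) : Prop :=
  w <> nil /\
  exists theta : R, 0 <= theta < 1 /\
  exists k : Z, forall i : nat, (i < length w)%nat ->
    nth i w false = sturm alpha theta (k + Z.of_nat i)%Z.

From Stdlib Require Import Reals Lra Lia ZArith List Classical.
Import ListNotations.
Open Scope R_scope.

(* Bounded partial quotients make alpha badly approximable, |q alpha - p| >= c / |q|.
   Together with Dirichlet's theorem this lets the orbit n alpha mod 1 come within rho of
   any point in O(1/rho) steps, while the first n letters of a Sturmian word, as functions
   of the intercept, are constant on an interval of length c/(4n) next to any given
   intercept; hence every factor u occurs in every factor of length L|u| within its first
   L|u| letters (linear recurrence).
   For subadditive F, the maximum M(n) of F over factors of length n is subadditive, and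
   Fekete's lemma gives M(n)/n -> lambda = inf M(n)/n, an upper bound for F(w)/|w|.
   Conversely, a long factor u with F(u) <= (lambda - eps)|u| would occur in every long
   word with gaps of at most L|u|; cutting along these occurrences gives
   M(N) <= (lambda - eta) N + O(1), contradicting the definition of lambda. *)

Lemma floorZ_spec x : IZR (floorZ x) <= x < IZR (floorZ x) + 1.
Proof.
  unfold floorZ. destruct (archimed x). rewrite minus_IZR. lra.
Qed.

Lemma floorZ_unique x (n : Z) : IZR n <= x < IZR n + 1 -> floorZ x = n.
Proof.
  intros [H1 H2]. unfold floorZ.
  enough (up x = (n + 1)%Z) by lia.
  symmetry. apply tech_up; rewrite plus_IZR; lra.
Qed.

Lemma fracR_bounds x : 0 <= fracR x < 1.
Proof. unfold fracR. pose proof (floorZ_spec x). lra. Qed.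

Lemma fracR_add_IZR x (z : Z) : fracR (x + IZR z) = fracR x.
Proof.
  unfold fracR. pose proof (floorZ_spec x).
  rewrite (floorZ_unique (x + IZR z) (floorZ x + z)); rewrite plus_IZR; lra.
Qed.

(** * Continued fractions with bounded partial quotients *)

Lemma irrational_neq0 x : irrational x -> x <> 0.
Proof. intros H E. apply H. exists 0%Z, 1%Z. split; [lia|]. rewrite E. simpl. field. Qed.

Lemma cf_rem_inv alpha k :
  / cf_rem alpha k = IZR (cf_digit alpha k) + cf_rem alpha (S k).
Proof. simpl. unfold cf_digit, fracR. ring. Qed.

Definition potential (mu q e : R) : R := q * Rabs e - mu * e ^ 2.

(* The quadratic term absorbs the error [e |E|] made when passing from [(q, e)] to [(p, E)]. *)
Lemma potential_step (mu b p q e E : R) :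
  0 < b < 1 -> 1 <= mu * (1 - b) -> q * b = p + e -> e = - (b * E) ->
  potential mu p E <= potential mu q e.
Proof.
  intros Hb Hmu Hq He. unfold potential.
  assert (Habs : Rabs e = b * Rabs E)
    by (rewrite He, Rabs_Ropp, Rabs_mult, (Rabs_right b) by lra; reflexivity).
  assert (Hlow : - (b * Rabs E) <= e)
    by (rewrite <- Habs, <- Rabs_Ropp; pose proof (Rle_abs (- e)); lra).
  assert (Hq' : q * Rabs e = (p + e) * Rabs E) by (rewrite Habs, <- Hq; ring).
  assert (0 <= Rabs E) by apply Rabs_pos.
  assert (b + mu * b ^ 2 <= mu) by nra.
  rewrite Hq', <- (pow2_abs E), He.
  replace ((- (b * E)) ^ 2) with (b ^ 2 * Rabs E ^ 2) by (rewrite pow2_abs; ring).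
  nra.
Qed.

Lemma potential_ge_half (mu x p E : R) :
  0 < x <= Rabs E -> 2 * mu * Rabs E <= 1 -> 1 <= p -> x / 2 <= potential mu p E.
Proof.
  intros Hx Hmu Hp. unfold potential. rewrite <- pow2_abs.
  assert (0 <= (p - 1) * Rabs E) by (apply Rmult_le_pos; lra).
  assert (0 <= Rabs E * (1 - 2 * mu * Rabs E)) by (apply Rmult_le_pos; lra).
  nra.
Qed.

Definition badly_approximable (alpha c : R) : Prop :=
  forall q p : Z, q <> 0%Z -> c / Rabs (IZR q) <= Rabs (IZR q * alpha - IZR p).

Lemma badly_approximable_of_pos alpha c :
  (forall q p : Z, (1 <= q)%Z -> c / IZR q <= Rabs (IZR q * alpha - IZR p)) ->
  badly_approximable alpha c.
Proof.
  intros Hpos q p Hq. destruct (Z_lt_le_dec 0 q).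
  - rewrite <- abs_IZR, Z.abs_eq by lia. apply Hpos. lia.
  - rewrite <- abs_IZR, Z.abs_neq, <- Rabs_Ropp by lia.
    replace (- (IZR q * alpha - IZR p)) with (IZR (- q) * alpha - IZR (- p))
      by (rewrite !opp_IZR; ring).
    apply Hpos. lia.
Qed.

Section BoundedDigits.
Variable alpha : R.
Hypothesis alpha_bounds : 0 < alpha < 1.
Hypothesis alpha_irr : irrational alpha.

Lemma cf_rem_irrational k : irrational (cf_rem alpha k).
Proof.
  induction k as [|k IH]; [exact alpha_irr|].
  intros [p [q [Hq E]]].
  pose proof (irrational_neq0 _ IH) as Hb.
  pose proof (cf_rem_inv alpha k) as Hinv. rewrite E in Hinv.
  set (a := cf_digit alpha k) in *.
  assert (Hq' : IZR q <> 0) by (apply not_0_IZR; auto).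
  assert (Hden : IZR (a * q + p) <> 0).
  { rewrite plus_IZR, mult_IZR. intro H0.
    apply (Rinv_neq_0_compat _ Hb). rewrite Hinv. field_simplify; [|auto].
    replace (IZR a * IZR q + IZR p) with 0 by lra. field. auto. }
  apply IH. exists q, (a * q + p)%Z. split; [intro H0; apply Hden; rewrite H0; reflexivity|].
  rewrite <- (Rinv_inv (cf_rem alpha k)), Hinv.
  rewrite plus_IZR, mult_IZR in *. field. auto.
Qed.

Lemma cf_rem_bounds k : 0 < cf_rem alpha k < 1.
Proof.
  destruct k as [|k]; [exact alpha_bounds|].
  pose proof (fracR_bounds (/ cf_rem alpha k)).
  pose proof (irrational_neq0 _ (cf_rem_irrational (S k))). simpl in *. lra.
Qed.

Lemma cf_digit_ge1 k : 1 <= IZR (cf_digit alpha k).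
Proof.
  pose proof (cf_rem_bounds k) as [H1 H2].
  pose proof (floorZ_spec (/ cf_rem alpha k)).
  assert (1 < / cf_rem alpha k) by (rewrite <- Rinv_1; apply Rinv_lt_contravar; lra).
  unfold cf_digit. apply IZR_le, Z.lt_pred_le, lt_IZR. simpl. lra.
Qed.

Variable A : R.
Hypothesis digit_le : forall k, IZR (cf_digit alpha k) <= A.

Lemma digit_bound_ge1 : 1 <= A.
Proof. pose proof (cf_digit_ge1 0). pose proof (digit_le 0). lra. Qed.

Lemma cf_rem_lower_bound k : 1 <= (A + 1) * cf_rem alpha k.
Proof.
  pose proof (cf_rem_bounds k) as [Hb0 Hb1]. pose proof (cf_rem_bounds (S k)).
  pose proof (cf_rem_inv alpha k) as Hinv. pose proof (digit_le k).
  assert (cf_rem alpha k * / cf_rem alpha k = 1) by (field; lra).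
  rewrite Hinv in *.
  set (b := cf_rem alpha k) in *. set (b' := cf_rem alpha (S k)) in *.
  assert (0 <= b * (A + 1 - (IZR (cf_digit alpha k) + b'))) by (apply Rmult_le_pos; lra).
  nra.
Qed.

Lemma cf_rem_upper_bound k : 1 <= (A + 2) * (1 - cf_rem alpha k).
Proof.
  pose proof (cf_rem_bounds k) as [Hb0 Hb1]. pose proof (cf_rem_lower_bound (S k)).
  pose proof (cf_rem_inv alpha k) as Hinv. pose proof (cf_digit_ge1 k).
  assert (cf_rem alpha k * / cf_rem alpha k = 1) by (field; lra).
  rewrite Hinv in *.
  set (b := cf_rem alpha k) in *. set (b' := cf_rem alpha (S k)) in *.
  assert (b + b * b' <= 1) by nra.
  assert (0 <= b * ((A + 1) * b' - 1)) by (apply Rmult_le_pos; lra).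
  pose proof digit_bound_ge1.
  nra.
Qed.

Let mu := A + 2.
Let eta := / (2 * (A + 1) * (A + 2)).

Lemma eta_facts : 0 < eta /\ 2 * (A + 1) * (A + 2) * eta = 1.
Proof.
  pose proof digit_bound_ge1. unfold eta.
  split; [apply Rinv_0_lt_compat; nra | field; lra].
Qed.

Lemma cf_numerator_range k (q p : Z) : (1 <= q)%Z ->
  Rabs (IZR q * cf_rem alpha k - IZR p) < eta -> (1 <= p < q)%Z.
Proof.
  intros Hq He. pose proof (cf_rem_lower_bound k). pose proof (cf_rem_upper_bound k).
  pose proof (cf_rem_bounds k). destruct eta_facts. pose proof digit_bound_ge1.
  apply IZR_le in Hq. apply Rabs_def2 in He.
  assert ((A + 1) * eta <= / 2 /\ (A + 2) * eta <= / 2) as [HA1 HA2] by (split; nra).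
  assert (eta < cf_rem alpha k /\ eta < 1 - cf_rem alpha k) as [Hb1 Hb2] by (split; nra).
  assert (0 < p)%Z by (apply lt_IZR; nra).
  assert (p < q)%Z by (apply lt_IZR; nra).
  lia.
Qed.

(* Induction on [q] along the Gauss map: (q, p) at [cf_rem k] becomes (p, q - p a_k) at
   [cf_rem (S k)], and the potential does not increase. *)
Lemma cf_potential_lower q k p : (1 <= q)%Z ->
  Rabs (IZR q * cf_rem alpha k - IZR p) < eta ->
  eta / 2 <= potential mu (IZR q) (IZR q * cf_rem alpha k - IZR p).
Proof.
  intros Hq. assert (Hq0 : (0 <= q)%Z) by lia. revert k p Hq.
  pattern q. apply Z_lt_induction; [clear q Hq0 | exact Hq0].
  intros q IH k p Hq He.
  destruct (cf_numerator_range k q p Hq He) as [Hp1 Hpq].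
  pose proof (cf_rem_bounds k).
  pose proof (cf_rem_lower_bound k). pose proof (cf_rem_upper_bound k).
  pose proof (cf_rem_inv alpha k) as Hinv. destruct eta_facts.
  set (b := cf_rem alpha k) in *. set (b' := cf_rem alpha (S k)) in *.
  set (e := IZR q * b - IZR p) in *.
  set (E := IZR p * b' - IZR (q - p * cf_digit alpha k)).
  assert (HeE : e = - (b * E)).
  { unfold e, E. rewrite minus_IZR, mult_IZR.
    replace b' with (/ b - IZR (cf_digit alpha k)) by lra. field. lra. }
  apply Rle_trans with (potential mu (IZR p) E).
  - destruct (Rlt_le_dec (Rabs E) eta) as [Hsmall | Hlarge].
    + apply (IH p ltac:(lia) (S k)); [lia | exact Hsmall].
    + assert (Rabs e = b * Rabs E)
        by (rewrite HeE, Rabs_Ropp, Rabs_mult, (Rabs_right b) by lra; reflexivity).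
      apply potential_ge_half; [lra | unfold mu; nra | apply IZR_le; lia].
  - apply (potential_step mu b); unfold mu; try lra. unfold e. ring.
Qed.

Lemma bounded_digits_badly_approximable :
  exists c, 0 < c /\ badly_approximable alpha c.
Proof.
  exists (eta / 2). destruct eta_facts. split; [lra|].
  apply badly_approximable_of_pos. intros q p Hq1.
  assert (HqR : 1 <= IZR q) by (apply IZR_le; lia).
  apply (Rmult_le_reg_l (IZR q)); [lra|].
  replace (IZR q * (eta / 2 / IZR q)) with (eta / 2) by (field; lra).
  destruct (Rlt_le_dec (Rabs (IZR q * alpha - IZR p)) eta) as [Hs | Hs].
  - pose proof (cf_potential_lower q 0 p Hq1 Hs) as Hpot. unfold potential in Hpot.
    assert (0 <= mu * (IZR q * alpha - IZR p) ^ 2)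
      by (apply Rmult_le_pos; [unfold mu; pose proof digit_bound_ge1; lra | apply pow2_ge_0]).
    simpl in Hpot. lra.
  - nra.
Qed.

End BoundedDigits.

(** * Density of the orbit of a badly approximable number *)

Lemma pigeonhole (f : nat -> nat) N : (forall i, (i <= N)%nat -> (f i < N)%nat) ->
  exists i j, (i < j <= N)%nat /\ f i = f j.
Proof.
  intros Hf. apply NNPP. intros Hno.
  assert (Hinj : NoDup (map f (seq 0 (S N)))).
  { apply NoDup_map_NoDup_ForallPairs; [|apply seq_NoDup].
    intros i j Hi Hj E. apply in_seq in Hi, Hj.
    destruct (Nat.lt_trichotomy i j) as [H | [H | H]]; [| exact H |];
      exfalso; apply Hno; [exists i, j | exists j, i]; split; auto; lia. }
  apply NoDup_incl_length with (l' := seq 0 N) in Hinj.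
  - rewrite length_map, !length_seq in Hinj. lia.
  - intros y Hy. apply in_map_iff in Hy as [i [<- Hi]]. apply in_seq in Hi.
    apply in_seq. specialize (Hf i). lia.
Qed.

Lemma dirichlet (alpha : R) (Q : nat) : (1 <= Q)%nat ->
  exists (q : nat) (p : Z), (1 <= q <= Q)%nat /\ Rabs (INR q * alpha - IZR p) < / INR Q.
Proof.
  intros HQ. assert (HQR : 1 <= INR Q) by (apply (le_INR 1); auto).
  set (box i := floorZ (INR Q * fracR (INR i * alpha))).
  assert (Hbox : forall i, (0 <= box i < Z.of_nat Q)%Z).
  { intro i. unfold box. pose proof (fracR_bounds (INR i * alpha)).
    pose proof (floorZ_spec (INR Q * fracR (INR i * alpha))).
    split; [apply Z.lt_pred_le | ]; apply lt_IZR; rewrite <- ?INR_IZR_INZ; simpl; nra. }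
  destruct (pigeonhole (fun i => Z.to_nat (box i)) Q) as [i [j [Hij E]]].
  { intros i _. specialize (Hbox i). lia. }
  assert (Eb : box i = box j) by (pose proof (Hbox i); pose proof (Hbox j); lia).
  unfold box in Eb.
  pose proof (floorZ_spec (INR Q * fracR (INR i * alpha))).
  pose proof (floorZ_spec (INR Q * fracR (INR j * alpha))).
  exists (j - i)%nat, (floorZ (INR j * alpha) - floorZ (INR i * alpha))%Z.
  split; [lia|].
  replace (INR (j - i) * alpha - IZR (floorZ (INR j * alpha) - floorZ (INR i * alpha)))
    with (fracR (INR j * alpha) - fracR (INR i * alpha))
    by (unfold fracR; rewrite minus_INR, minus_IZR by lia; ring).
  apply (Rmult_lt_reg_l (INR Q)); [lra|].
  rewrite Rinv_r, <- (Rabs_right (INR Q)), <- Rabs_mult by lra.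
  apply Rabs_def1; rewrite Eb in *; lra.
Qed.

Lemma walk_into (x a s : R) : s <> 0 -> 0 <= (a - x) / s ->
  exists j : nat, INR j <= (a - x) / s + 1 /\ a <= x + INR j * s < a + Rabs s.
Proof.
  intros Hs Ht. set (t := (a - x) / s) in *.
  assert (Hts : t * s = a - x) by (unfold t; field; auto).
  destruct (Rlt_le_dec 0 s) as [Hpos | Hneg].
  - pose proof (floorZ_spec (- t)).
    exists (Z.to_nat (- floorZ (- t))).
    rewrite INR_IZR_INZ, Z2Nat.id, opp_IZR, Rabs_right
      by (try apply Z.opp_nonneg_nonpos, Z.lt_succ_r, lt_IZR; simpl; lra).
    split; [lra|]. split; nra.
  - pose proof (floorZ_spec t).
    exists (Z.to_nat (floorZ t)).
    rewrite INR_IZR_INZ, Z2Nat.id, Rabs_left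
      by (try apply Z.lt_pred_le, lt_IZR; simpl; lra).
    split; [lra|]. split; nra.
Qed.

Lemma dyadic_scale_aux : forall (N : nat) rho, 0 < rho <= 1 -> / rho <= INR N ->
  exists k, / 2 ^ k <= rho /\ 2 ^ k <= 2 / rho.
Proof.
  induction N as [|N IH]; intros rho Hr HN.
  - simpl in HN. pose proof (Rinv_0_lt_compat rho (proj1 Hr)). lra.
  - destruct (Rlt_le_dec (/ 2) rho).
    + exists 1%nat. simpl.
      assert (1 <= / rho) by (rewrite <- Rinv_1; apply Rinv_le_contravar; lra).
      unfold Rdiv. lra.
    + destruct (IH (2 * rho)) as [k [H1 H2]]; [lra | |].
      * rewrite S_INR in HN. rewrite Rinv_mult.
        assert (2 <= / rho) by (rewrite <- (Rinv_inv 2); apply Rinv_le_contravar; lra).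
        lra.
      * exists (S k). simpl. rewrite Rinv_mult.
        replace (2 / (2 * rho)) with (/ rho) in H2 by (field; lra).
        unfold Rdiv. lra.
Qed.

Lemma dyadic_scale rho : 0 < rho <= 1 -> exists k, / 2 ^ k <= rho /\ 2 ^ k <= 2 / rho.
Proof.
  intros Hr. destruct (INR_unbounded (/ rho)) as [N HN].
  apply (dyadic_scale_aux N); lra.
Qed.

Definition orbit_hits (alpha y a rho B : R) : Prop :=
  exists m : nat, INR m <= B /\ exists z : Z, a <= y + INR m * alpha + IZR z < a + rho.

Section Density.
Variable alpha c : R.
Hypothesis c_pos : 0 < c.
Hypothesis alpha_ba : badly_approximable alpha c.

Let K := 4 * (4 / c + 1).

Lemma K_pos : 0 < K.
Proof. unfold K. assert (0 < 4 / c) by (apply Rdiv_lt_0_compat; lra). lra. Qed.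

Lemma dyadic_return k : exists (q : nat) (p : Z), (1 <= q)%nat /\ INR q <= 4 * 2 ^ k /\
  c / INR q <= Rabs (INR q * alpha - IZR p) /\ Rabs (INR q * alpha - IZR p) <= / 2 ^ S k.
Proof.
  assert (HP : 0 < 2 ^ k) by (apply pow_lt; lra).
  assert (HQ : INR (2 ^ (k + 2)) = 4 * 2 ^ k)
    by (rewrite pow_INR, pow_add, (INR_IZR_INZ 2); simpl; ring).
  destruct (dirichlet alpha (2 ^ (k + 2))) as [q [p [Hq Hs]]].
  { apply Nat.neq_0_lt_0, Nat.pow_nonzero. lia. }
  exists q, p. rewrite HQ in Hs. repeat split; [lia | rewrite <- HQ; apply le_INR; lia | |].
  - pose proof (alpha_ba (Z.of_nat q) p ltac:(lia)) as Hb.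
    rewrite <- INR_IZR_INZ, Rabs_right in Hb by (apply Rle_ge, pos_INR). exact Hb.
  - assert (/ (4 * 2 ^ k) <= / 2 ^ S k) by (apply Rinv_le_contravar; simpl; lra). lra.
Qed.

Lemma walk_length_bound (P h s : R) (q j : nat) :
  0 < P -> (1 <= q)%nat -> INR q <= 4 * P -> c / INR q <= Rabs s ->
  0 <= h <= / P -> INR j <= h / Rabs s + 1 -> INR j * INR q <= K * P.
Proof.
  intros HP Hq HqP Hs Hh Hj.
  assert (HqR : 1 <= INR q) by (apply (le_INR 1); auto).
  assert (0 < c / INR q) by (apply Rdiv_lt_0_compat; lra).
  assert (Hinv : / Rabs s <= INR q / c) by (rewrite <- Rinv_div; apply Rinv_le_contravar; lra).
  assert (0 < / P) by (apply Rinv_0_lt_compat; lra).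
  assert (0 < INR q / c) by (apply Rdiv_lt_0_compat; lra).
  assert (h / Rabs s <= / P * (INR q / c))
    by (apply Rmult_le_compat; try lra; apply Rlt_le, Rinv_0_lt_compat; lra).
  assert (/ P * (INR q / c) * INR q <= / P * (4 * P / c) * (4 * P)).
  { assert (INR q / c <= 4 * P / c)
      by (apply Rmult_le_compat_r; [apply Rlt_le, Rinv_0_lt_compat|]; lra).
    apply Rmult_le_compat; nra. }
  replace (K * P) with (/ P * (4 * P / c) * (4 * P) + 4 * P) by (unfold K; field; lra).
  nra.
Qed.

(* Start from an orbit point on the side of [a] from which steps of length [s] lead to [a]. *)
Lemma orbit_hits_facing k a y s : s <> 0 ->
  (forall a', orbit_hits alpha y a' (/ 2 ^ k) (K * 2 ^ k)) ->
  exists (m : nat) (z : Z), INR m <= K * 2 ^ k /\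
    let x := y + INR m * alpha + IZR z in Rabs (a - x) <= / 2 ^ k /\ 0 <= (a - x) / s.
Proof.
  intros Hs IH.
  assert (0 < / 2 ^ k) by (apply Rinv_0_lt_compat, pow_lt; lra).
  destruct (Rlt_le_dec 0 s).
  - destruct (IH (a - / 2 ^ k)) as [m [Hm [z Hz]]]. exists m, z. split; [exact Hm|].
    simpl. rewrite Rabs_right by lra. split; [lra | apply Rlt_le, Rdiv_pos_pos; lra].
  - destruct (IH a) as [m [Hm [z Hz]]]. exists m, z. split; [exact Hm|].
    simpl. rewrite Rabs_left1 by lra. split; [lra|].
    assert (/ s < 0) by (apply Rinv_lt_0_compat; lra). unfold Rdiv. nra.
Qed.

(* Precision [2^-k] is refined to [2^-(k+1)] by walking along a return [s = q alpha - p]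
   with [c/q <= |s| <= 2^-(k+1)]: [q (2^-k / |s| + 1) = O(2^k)] further steps suffice. *)
Lemma orbit_dyadic_dense k : forall a y, orbit_hits alpha y a (/ 2 ^ k) (K * 2 ^ k).
Proof.
  pose proof K_pos.
  induction k as [|k IH]; intros a y.
  - exists 0%nat. split; [simpl; lra|].
    exists (- floorZ (y - a))%Z. rewrite opp_IZR. pose proof (floorZ_spec (y - a)). simpl. lra.
  - destruct (dyadic_return k) as [q [p [Hq [HqP [Hba Hs]]]]].
    set (s := INR q * alpha - IZR p) in *.
    assert (Hs0 : s <> 0).
    { intro E. rewrite E, Rabs_R0 in Hba.
      assert (0 < c / INR q) by (apply Rdiv_lt_0_compat; [lra | apply (lt_INR 0); lia]). lra. }
    destruct (orbit_hits_facing k a y s Hs0 (fun a' => IH a' y)) as [m [z [Hm [Hdist Hsign]]]].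
    set (x := y + INR m * alpha + IZR z) in *.
    destruct (walk_into x a s Hs0 Hsign) as [j [Hj Hx]].
    exists (m + j * q)%nat. split.
    + assert (INR j * INR q <= K * 2 ^ k).
      { apply (walk_length_bound (2 ^ k) (Rabs (a - x)) s); auto;
          [apply pow_lt; lra | split; [apply Rabs_pos | exact Hdist] |].
        unfold Rdiv in *. rewrite <- Rabs_inv, <- Rabs_mult, Rabs_right by (auto; lra).
        exact Hj. }
      rewrite plus_INR, mult_INR. simpl. lra.
    + exists (z - Z.of_nat j * p)%Z.
      replace (y + INR (m + j * q) * alpha + IZR (z - Z.of_nat j * p)) with (x + INR j * s)
        by (unfold x, s; rewrite plus_INR, mult_INR, minus_IZR, mult_IZR, <- INR_IZR_INZ; ring).
      lra.
Qed.

Lemma orbit_linearly_dense : exists B,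
  forall rho a y, 0 < rho <= 1 -> orbit_hits alpha y a rho (B / rho).
Proof.
  exists (2 * K). pose proof K_pos.
  intros rho a y Hr. destruct (dyadic_scale rho Hr) as [k [H1 H2]].
  destruct (orbit_dyadic_dense k a y) as [m [Hm [z Hz]]].
  exists m. split.
  - replace (2 * K / rho) with (K * (2 / rho)) by (field; lra).
    assert (K * 2 ^ k <= K * (2 / rho)) by (apply Rmult_le_compat_l; lra). lra.
  - exists z. lra.
Qed.

End Density.

(** * Linear recurrence of Sturmian words *)

Lemma list_factor_at {A : Type} (d : A) (u v : list A) (m : nat) :
  (m + length u <= length v)%nat ->
  (forall i, (i < length u)%nat -> nth (m + i) v d = nth i u d) ->
  v = firstn m v ++ u ++ skipn (m + length u) v.
Proof.
  intros Hlen Hocc.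
  rewrite <- (firstn_skipn m v) at 1. f_equal.
  rewrite <- (firstn_skipn (length u) (skipn m v)), skipn_skipn, Nat.add_comm. f_equal.
  apply nth_ext with (d := d) (d' := d).
  - rewrite length_firstn, length_skipn. lia.
  - intros i Hi. rewrite length_firstn, length_skipn in Hi.
    rewrite nth_firstn, nth_skipn. destruct (Nat.ltb_spec i (length u)); [|lia].
    apply Hocc. lia.
Qed.

Definition linearly_recurrent {A : Type} (W : list A -> Prop) (R : nat) : Prop :=
  forall u v, W u -> W v -> (R * length u <= length v)%nat ->
  exists g v', v = g ++ u ++ v' /\ (length g <= R * length u)%nat.

Section Sturmian.
Variable alpha c : R.
Hypothesis alpha_bounds : 0 < alpha < 1.
Hypothesis c_pos : 0 < c.
Hypothesis alpha_ba : badly_approximable alpha c.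

Definition letter (i : nat) (x : R) : bool :=
  if Rle_dec (1 - alpha) (fracR (x + INR i * alpha)) then true else false.

Lemma in_W_letters u : in_W alpha u ->
  exists x, forall i, (i < length u)%nat -> nth i u false = letter i x.
Proof.
  intros [_ [theta [_ [k Hk]]]]. exists (IZR k * alpha + theta). intros i Hi.
  rewrite Hk by exact Hi. unfold sturm, letter.
  rewrite plus_IZR, <- INR_IZR_INZ.
  replace ((IZR k + INR i) * alpha + theta) with (IZR k * alpha + theta + INR i * alpha) by ring.
  reflexivity.
Qed.

Lemma letter_add_IZR i x (z : Z) : letter i (x + IZR z) = letter i x.
Proof.
  unfold letter. replace (x + IZR z + INR i * alpha) with (x + INR i * alpha + IZR z) by ring.
  rewrite fracR_add_IZR. reflexivity.
Qed.

Lemma letter_add j i x : letter (j + i) x = letter i (x + INR j * alpha).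
Proof.
  unfold letter. rewrite plus_INR.
  replace (x + (INR j + INR i) * alpha) with (x + INR j * alpha + INR i * alpha) by ring.
  reflexivity.
Qed.

Lemma c_div_INR_le1 n : (1 <= n)%nat -> c / INR n <= 1.
Proof.
  intros Hn. assert (HnR : 1 <= INR n) by (apply (le_INR 1); auto).
  pose proof (alpha_ba 1%Z 0%Z ltac:(lia)) as Hc.
  rewrite Rabs_R1, Rdiv_1_r, Rmult_1_l, Rminus_0_r, Rabs_right in Hc by lra.
  apply Rmult_le_reg_r with (INR n); [lra|].
  unfold Rdiv. rewrite Rmult_assoc, Rinv_l; lra.
Qed.

(* The points where [letter i] may jump. *)
Definition cut (i : nat) (z : R) : Prop :=
  exists (j : nat) (w : Z), (j = i \/ j = S i) /\ z + INR j * alpha = IZR w.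

Lemma letter_const i x x' : x <= x' -> (forall z, x < z <= x' -> ~ cut i z) ->
  letter i x = letter i x'.
Proof.
  intros Hxx Hno.
  set (s := x + INR i * alpha). set (s' := x' + INR i * alpha).
  pose proof (floorZ_spec s) as [F1 F2]. set (fl := floorZ s) in *.
  assert (Hfl : floorZ s' = fl).
  { apply floorZ_unique. split; [unfold s, s' in *; lra|].
    apply Rnot_le_lt. intro Hge. apply (Hno (IZR (fl + 1) - INR i * alpha)).
    - rewrite plus_IZR. unfold s, s' in *. lra.
    - exists i, (fl + 1)%Z. split; [left; reflexivity | ring]. }
  unfold letter. fold s s'. unfold fracR. rewrite Hfl. fold fl.
  destruct (Rle_dec (1 - alpha) (s - IZR fl)), (Rle_dec (1 - alpha) (s' - IZR fl));
    [reflexivity | unfold s, s' in *; lra | exfalso | reflexivity].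
  apply (Hno (x + (1 - alpha - (s - IZR fl)))); [unfold s, s' in *; lra|].
  exists (S i), (fl + 1)%Z. split; [right; reflexivity|].
  rewrite S_INR, plus_IZR. unfold s. ring.
Qed.

Lemma cut_sep n i1 i2 z1 z2 : (i1 < n)%nat -> (i2 < n)%nat ->
  cut i1 z1 -> cut i2 z2 -> z1 <> z2 -> c / INR n <= Rabs (z1 - z2).
Proof.
  intros H1 H2 [j1 [w1 [Hj1 E1]]] [j2 [w2 [Hj2 E2]]] Hne.
  assert (HnR : 1 <= INR n) by (apply (le_INR 1); lia).
  destruct (Nat.eq_dec j1 j2) as [<- | Hj].
  - assert (Hw : z1 - z2 = IZR (w1 - w2)) by (rewrite minus_IZR; lra).
    assert (1 <= Rabs (IZR (w1 - w2))).
    { rewrite <- abs_IZR. apply IZR_le. enough (w1 - w2 <> 0)%Z by lia.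
      intro E. rewrite E in Hw. simpl in Hw. lra. }
    pose proof (c_div_INR_le1 n ltac:(lia)).
    rewrite Hw. lra.
  - set (q := (Z.of_nat j1 - Z.of_nat j2)%Z).
    pose proof (alpha_ba q (w1 - w2)%Z ltac:(unfold q; lia)) as Hb.
    replace (IZR q * alpha - IZR (w1 - w2)) with (- (z1 - z2)) in Hb
      by (unfold q; rewrite !minus_IZR, <- !INR_IZR_INZ; lra).
    rewrite Rabs_Ropp in Hb.
    assert (1 <= Rabs (IZR q)) by (rewrite <- abs_IZR; apply IZR_le; lia).
    assert (Rabs (IZR q) <= INR n)
      by (rewrite <- abs_IZR, INR_IZR_INZ; apply IZR_le; unfold q; lia).
    assert (c / INR n <= c / Rabs (IZR q))
      by (apply Rmult_le_compat_l; [lra | apply Rinv_le_contravar; lra]).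
    lra.
Qed.

(* Cuts of levels below [n] are [c/n] apart, so a cut-free interval of length [c/(4n)]
   starts or ends at [x0]. *)
Lemma cylinder n x0 : (1 <= n)%nat -> exists a, forall x, a <= x < a + c / (4 * INR n) ->
  forall i, (i < n)%nat -> letter i x = letter i x0.
Proof.
  intros Hn. assert (HnR : 1 <= INR n) by (apply (le_INR 1); auto).
  set (rho := c / (4 * INR n)).
  assert (Hrho : 0 < rho) by (apply Rdiv_lt_0_compat; lra).
  assert (Hrho3 : 3 * rho < c / INR n).
  { replace rho with (c / INR n / 4) by (unfold rho; field; lra).
    assert (0 < c / INR n) by (apply Rdiv_lt_0_compat; lra). lra. }
  destruct (classic (exists z i, (i < n)%nat /\ x0 < z < x0 + 2 * rho /\ cut i z))
    as [[z1 [i1 [Hi1 [Hz1 Cz1]]]] | Hno].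
  - exists (x0 - rho). intros x Hx i Hi.
    apply letter_const; [lra|]. intros z Hz Cz.
    assert (Hsep : c / INR n <= Rabs (z - z1)) by (apply (cut_sep n i i1); auto; lra).
    rewrite Rabs_left in Hsep; lra.
  - exists x0. intros x Hx i Hi. symmetry.
    apply letter_const; [lra|]. intros z Hz Cz.
    apply Hno. exists z, i. repeat split; auto; lra.
Qed.

(* The letters of [u] are constant for intercepts in an interval of length [c/(4|u|)],
   which the orbit of the intercept of [v] enters within [O(|u|)] steps. *)
Lemma in_W_linearly_recurrent : exists R, (1 <= R)%nat /\ linearly_recurrent (in_W alpha) R.
Proof.
  destruct (orbit_linearly_dense alpha c c_pos alpha_ba) as [B Hdense].
  destruct (INR_unbounded (4 * B / c)) as [R0 HR0].
  exists (S R0). split; [lia|].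
  intros u v Hu Hv Hlen.
  destruct (in_W_letters u Hu) as [x0 Hx0]. destruct (in_W_letters v Hv) as [y0 Hy0].
  assert (Hn : (1 <= length u)%nat) by (destruct u; [destruct Hu; congruence | simpl; lia]).
  set (n := length u) in *.
  assert (HnR : 1 <= INR n) by (apply (le_INR 1); auto).
  destruct (cylinder n x0 Hn) as [a Ha].
  set (rho := c / (4 * INR n)) in *.
  assert (Hrho : 0 < rho <= 1).
  { replace rho with (c / INR n / 4) by (unfold rho; field; lra).
    pose proof (c_div_INR_le1 n Hn).
    assert (0 < c / INR n) by (apply Rdiv_lt_0_compat; lra). lra. }
  destruct (Hdense rho a y0 Hrho) as [m [Hm [z Hz]]].
  assert (Hm' : (m <= R0 * n)%nat).
  { apply INR_le. rewrite mult_INR.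
    replace (B / rho) with (4 * B / c * INR n) in Hm by (unfold rho; field; lra).
    nra. }
  exists (firstn m v), (skipn (m + n) v). split.
  - apply (list_factor_at false). { simpl in Hlen. lia. }
    intros i Hi. rewrite Hy0 by (simpl in Hlen; lia). rewrite Hx0 by exact Hi.
    rewrite letter_add, <- (letter_add_IZR i _ z). apply Ha; [lra | exact Hi].
  - rewrite length_firstn. lia.
Qed.

End Sturmian.

(** * Subadditive functions on linearly recurrent languages *)

Section Fekete.
Variable a : nat -> R.
Hypothesis a_nonneg : forall n, 0 <= a n.
Hypothesis a_subadditive : forall m n, a (m + n) <= a m + a n.

Let neg_slope (x : R) : Prop := exists n, (1 <= n)%nat /\ x = - (a n / INR n).

Lemma slope_nonneg n : (1 <= n)%nat -> 0 <= a n / INR n.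
Proof.
  intros Hn. apply Rmult_le_pos; [apply a_nonneg | apply Rlt_le, Rinv_0_lt_compat, (lt_INR 0); lia].
Qed.

Lemma neg_slope_bound : bound neg_slope.
Proof. exists 0. intros x [n [Hn ->]]. pose proof (slope_nonneg n Hn). lra. Qed.

Lemma neg_slope_inhabited : exists x, neg_slope x.
Proof. exists (- (a 1 / INR 1)), 1%nat. auto. Qed.

Definition fekete_limit : R :=
  - proj1_sig (completeness neg_slope neg_slope_bound neg_slope_inhabited).

Lemma fekete_limit_le n : (1 <= n)%nat -> fekete_limit <= a n / INR n.
Proof.
  intros Hn. unfold fekete_limit. destruct completeness as [x [Hub Hlub]]. simpl.
  enough (- (a n / INR n) <= x) by lra. apply Hub. exists n. auto.
Qed.

Lemma fekete_limit_approx eps : 0 < eps ->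
  exists n, (1 <= n)%nat /\ a n / INR n < fekete_limit + eps.
Proof.
  intros He. unfold fekete_limit. destruct completeness as [x [Hub Hlub]]. simpl.
  apply NNPP. intros Hno.
  enough (x <= x - eps) by lra.
  apply Hlub. intros y [n [Hn ->]].
  apply Ropp_le_cancel. rewrite Ropp_involutive.
  apply Rnot_lt_le. intro Hlt. apply Hno. exists n. split; [exact Hn | lra].
Qed.

Lemma fekete_limit_nonneg : 0 <= fekete_limit.
Proof.
  unfold fekete_limit. destruct completeness as [x [Hub Hlub]]. simpl.
  enough (x <= 0) by lra.
  apply Hlub. intros y [m [Hm ->]]. pose proof (slope_nonneg m Hm). lra.
Qed.

Lemma subadditive_le_linear r : a r <= a 0 + INR r * a 1.
Proof.
  induction r as [|r IH]; [simpl; lra|].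
  rewrite S_INR. pose proof (a_subadditive 1 r). simpl in *. lra.
Qed.

Lemma subadditive_mul s n r : a (s * n + r) <= INR s * a n + a r.
Proof.
  induction s as [|s IH]; [simpl; lra|].
  replace (S s * n + r)%nat with (n + (s * n + r))%nat by lia.
  pose proof (a_subadditive n (s * n + r)). rewrite S_INR. lra.
Qed.

Lemma subadditive_linear_bound delta : 0 < delta ->
  exists D, forall N, a N <= (fekete_limit + delta) * INR N + D.
Proof.
  intros Hd. destruct (fekete_limit_approx delta Hd) as [n [Hn Hslope]].
  assert (HnR : 1 <= INR n) by (apply (le_INR 1); auto).
  assert (Han : a n <= (fekete_limit + delta) * INR n).
  { apply Rmult_lt_compat_r with (r := INR n) in Hslope; [|lra].
    unfold Rdiv in Hslope. rewrite Rmult_assoc, Rinv_l, Rmult_1_r in Hslope; lra. }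
  exists (a 0 + INR n * a 1). intros N.
  rewrite (Nat.div_mod_eq N n).
  pose proof (Nat.mod_upper_bound N n ltac:(lia)).
  set (s := (N / n)%nat). set (r := (N mod n)%nat).
  rewrite Nat.mul_comm.
  pose proof (subadditive_mul s n r). pose proof (subadditive_le_linear r).
  pose proof fekete_limit_nonneg. pose proof (a_nonneg 1). pose proof (pos_INR s).
  assert (INR r <= INR n) by (apply le_INR; lia).
  assert (INR s * a n <= INR s * ((fekete_limit + delta) * INR n))
    by (apply Rmult_le_compat_l; lra).
  assert (INR r * a 1 <= INR n * a 1) by (apply Rmult_le_compat_r; lra).
  assert (0 <= (fekete_limit + delta) * INR r) by (apply Rmult_le_pos; [lra | apply pos_INR]).
  rewrite plus_INR, mult_INR. lra.
Qed.

End Fekete.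

Section SubadditiveOnRecurrentLanguage.
Variable W : list bool -> Prop.
Hypothesis W_infix : forall x y z, W (x ++ y ++ z) -> y <> [] -> W y.
Hypothesis W_lengths : forall n, (1 <= n)%nat -> exists w, W w /\ length w = n.
Variable L : nat.
Hypothesis L_pos : (1 <= L)%nat.
Hypothesis W_recurrent : linearly_recurrent W L.
Variable F : list bool -> R.
Hypothesis F_nonneg : forall w, W w -> 0 <= F w.
Hypothesis F_subadditive : forall a b, W a -> W b -> W (a ++ b) -> F (a ++ b) <= F a + F b.

(* Adjoining the empty word, with value 0, lets the factors of a decomposition be empty. *)
Definition W0 (v : list bool) : Prop := v = [] \/ W v.
Definition F0 (v : list bool) : R := match v with [] => 0 | _ => F v end.

Lemma W0_infix x y z : W0 (x ++ y ++ z) -> W0 y.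
Proof.
  intros [E | H].
  - left. destruct x, y; simpl in *; congruence.
  - destruct y as [|b y]; [left; reflexivity | right; apply (W_infix x _ z H); discriminate].
Qed.

Lemma W0_app_l x y : W0 (x ++ y) -> W0 x.
Proof. apply (W0_infix [] x y). Qed.

Lemma W0_app_r x y : W0 (x ++ y) -> W0 y.
Proof. intros H. apply (W0_infix x y []). rewrite app_nil_r. exact H. Qed.

Lemma W0_of_W v : W v -> W0 v.
Proof. intros H. right. exact H. Qed.

Lemma F0_nonneg v : W0 v -> 0 <= F0 v.
Proof. intros [-> | H]; [simpl; lra | destruct v; [simpl; lra | apply F_nonneg, H]]. Qed.

Lemma F0_subadditive x y : W0 (x ++ y) -> F0 (x ++ y) <= F0 x + F0 y.
Proof.
  intros H. destruct x as [|b x]; [simpl; lra|].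
  destruct y as [|b' y]; [rewrite app_nil_r; simpl; lra|].
  destruct (W0_app_l _ _ H) as [E | Hx]; [discriminate|].
  destruct (W0_app_r _ _ H) as [E | Hy]; [discriminate|].
  destruct H as [E | Hxy]; [discriminate|].
  exact (F_subadditive _ _ Hx Hy Hxy).
Qed.

Lemma F0_le_length v : W0 v -> F0 v <= INR (length v) * Rmax (F [false]) (F [true]).
Proof.
  induction v as [|b v IH]; intros H; [simpl; lra|].
  change (b :: v) with ([b] ++ v) in H |- *.
  pose proof (F0_subadditive _ _ H). pose proof (IH (W0_app_r _ _ H)).
  assert (F0 [b] <= Rmax (F [false]) (F [true])) by (destruct b; simpl; auto using Rmax_l, Rmax_r).
  rewrite length_app, plus_INR. simpl INR. lra.
Qed.

Let values_of_length (n : nat) (x : R) : Prop := exists w, W0 w /\ length w = n /\ x = F0 w.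

Lemma values_of_length_bound n : bound (values_of_length n).
Proof.
  exists (INR n * Rmax (F [false]) (F [true])).
  intros x [w [Hw [<- ->]]]. apply F0_le_length, Hw.
Qed.

Lemma values_of_length_inhabited n : exists x, values_of_length n x.
Proof.
  destruct n as [|n]; [exists 0, []; repeat split; left; reflexivity|].
  destruct (W_lengths (S n) ltac:(lia)) as [w [Hw Hlen]].
  exists (F0 w), w. repeat split; auto. right. exact Hw.
Qed.

Definition Fmax (n : nat) : R :=
  proj1_sig (completeness _ (values_of_length_bound n) (values_of_length_inhabited n)).

Lemma Fmax_ge w : W0 w -> F0 w <= Fmax (length w).
Proof.
  intros Hw. unfold Fmax. destruct completeness as [x [Hub Hlub]]. simpl.
  apply Hub. exists w. auto.
Qed.

Lemma Fmax_le n B : (forall w, W0 w -> length w = n -> F0 w <= B) -> Fmax n <= B.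
Proof.
  intros H. unfold Fmax. destruct completeness as [x [Hub Hlub]]. simpl.
  apply Hlub. intros y [w [Hw [Hlen ->]]]. auto.
Qed.

Lemma Fmax_nonneg n : 0 <= Fmax n.
Proof.
  destruct (values_of_length_inhabited n) as [x [w [Hw [<- ->]]]].
  pose proof (Fmax_ge w Hw). pose proof (F0_nonneg w Hw). lra.
Qed.

Lemma Fmax_subadditive m n : Fmax (m + n) <= Fmax m + Fmax n.
Proof.
  apply Fmax_le. intros w Hw Hlen.
  rewrite <- (firstn_skipn m w) in Hw |- *.
  pose proof (F0_subadditive _ _ Hw).
  pose proof (Fmax_ge _ (W0_app_l _ _ Hw)). pose proof (Fmax_ge _ (W0_app_r _ _ Hw)).
  rewrite length_firstn, length_skipn in *.
  replace (Nat.min m (length w)) with m in * by lia.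
  replace (length w - m)%nat with n in * by lia.
  lra.
Qed.

Let lambda := fekete_limit Fmax Fmax_nonneg.

Lemma F_upper eps : 0 < eps ->
  exists N, forall w, W w -> (N <= length w)%nat -> F w <= (lambda + eps) * INR (length w).
Proof.
  intros He. destruct (subadditive_linear_bound Fmax Fmax_nonneg Fmax_subadditive (eps / 2))
    as [D HD]; [lra|].
  destruct (INR_unbounded (2 * D / eps)) as [N HN].
  exists (S N). intros w Hw Hlen.
  assert (HwR : INR N <= INR (length w)) by (apply le_INR; lia).
  pose proof (Fmax_ge w (W0_of_W w Hw)). pose proof (HD (length w)).
  assert (D <= eps / 2 * INR (length w)).
  { replace D with (eps / 2 * (2 * D / eps)) by (field; lra).
    apply Rmult_le_compat_l; lra. }
  destruct w as [|b w]; [simpl in Hlen; lia|]. unfold lambda. simpl F0 in *. lra.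
Qed.

Section Tiling.
Variable u : list bool.
Hypothesis u_in_W : W u.
Hypothesis u_nonempty : u <> [].
Variables kappa mu D : R.
Hypothesis Fmax_le_linear : forall m, Fmax m <= kappa * INR m + D.
Hypothesis mu_le_kappa : mu <= kappa.
Hypothesis u_cheap :
  (kappa - mu) * INR (L * length u) + D + F u <= mu * INR (length u).

Let D' := (kappa - mu) * INR (L * length u) + D.

(* Cut [v] at an occurrence of [u] near its start and recurse on the remainder. *)
Lemma F0_le_tiling : forall v, W0 v -> F0 v <= mu * INR (length v) + D'.
Proof.
  assert (HD : 0 <= D)
    by (pose proof (Fmax_le_linear 0); pose proof (Fmax_nonneg 0); simpl in *; lra).
  assert (HD' : D <= D') by (unfold D'; pose proof (pos_INR (L * length u)); nra).
  assert (Hu1 : (1 <= length u)%nat) by (destruct u; [congruence | simpl; lia]).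
  intros v. remember (length v) as N eqn:HN. revert v HN.
  induction N as [N IH] using lt_wf_ind. intros v HN Hv.
  destruct (le_lt_dec (L * length u) N) as [Hlong | Hshort].
  - assert (Hv' : W v).
    { destruct Hv as [-> | Hv]; [|exact Hv].
      simpl in HN. nia. }
    destruct (W_recurrent u v u_in_W Hv' ltac:(lia)) as [g [v' [-> Hg]]].
    rewrite !length_app in HN.
    pose proof (F0_subadditive _ _ Hv) as Hsplit1.
    pose proof (F0_subadditive _ _ (W0_app_r _ _ Hv)) as Hsplit2.
    pose proof (IH (length v') ltac:(lia) v' eq_refl (W0_app_r _ _ (W0_app_r _ _ Hv))).
    pose proof (Fmax_ge g (W0_app_l _ _ Hv)). pose proof (Fmax_le_linear (length g)).
    assert (F0 u = F u) by (destruct u; [congruence | reflexivity]).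
    assert ((kappa - mu) * INR (length g) <= (kappa - mu) * INR (L * length u))
      by (apply Rmult_le_compat_l; [lra | apply le_INR; exact Hg]).
    rewrite HN, !plus_INR. unfold D' in *. lra.
  - pose proof (Fmax_ge v Hv). pose proof (Fmax_le_linear (length v)).
    assert ((kappa - mu) * INR N <= (kappa - mu) * INR (L * length u))
      by (apply Rmult_le_compat_l; [lra | apply le_INR; lia]).
    subst N. unfold D'. lra.
Qed.

Lemma fekete_limit_le_of_tiling : lambda <= mu.
Proof.
  apply Rnot_lt_le. intros Hlt.
  destruct (INR_unbounded (D' / (lambda - mu))) as [N0 HN0].
  set (N := S N0).
  assert (HN : D' / (lambda - mu) < INR N) by (unfold N; rewrite S_INR; lra).
  assert (HNR : 1 <= INR N) by (apply (le_INR 1); unfold N; lia).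
  pose proof (fekete_limit_le Fmax Fmax_nonneg N ltac:(unfold N; lia)) as Hlam. fold lambda in Hlam.
  assert (Fmax N <= mu * INR N + D') by (apply Fmax_le; intros w Hw <-; apply F0_le_tiling, Hw).
  apply Rmult_le_compat_r with (r := INR N) in Hlam; [|lra].
  unfold Rdiv in Hlam. rewrite Rmult_assoc, Rinv_l, Rmult_1_r in Hlam by lra.
  apply Rmult_lt_compat_r with (r := lambda - mu) in HN; [|lra].
  unfold Rdiv in HN. rewrite Rmult_assoc, Rinv_l, Rmult_1_r in HN by lra.
  lra.
Qed.

End Tiling.

Lemma F_lower eps : 0 < eps ->
  exists N, forall u, W u -> (N <= length u)%nat -> (lambda - eps) * INR (length u) <= F u.
Proof.
  intros He.
  assert (HL : 1 <= INR L) by (apply (le_INR 1); exact L_pos).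
  set (eta := eps / (4 * (INR L + 1))).
  assert (Heta : 0 < eta) by (apply Rdiv_lt_0_compat; lra).
  assert (2 * eta * INR L <= eps / 2 /\ eta <= eps / 4) as [HetaL Heta4].
  { unfold eta. split; apply Rmult_le_reg_r with (4 * (INR L + 1)); try lra;
      field_simplify; nra. }
  destruct (subadditive_linear_bound Fmax Fmax_nonneg Fmax_subadditive eta Heta) as [D HD].
  destruct (INR_unbounded (4 * D / eps)) as [N0 HN0].
  exists (S N0). intros u Hu Hlen. apply Rnot_lt_le. intros Hcheap.
  assert (Hu0 : u <> []) by (intros ->; simpl in Hlen; lia).
  set (n := length u) in *.
  assert (HnR : 4 * D / eps <= INR n)
    by (apply Rlt_le, (Rlt_le_trans _ (INR N0)); [lra | apply le_INR; lia]).
  assert (HDn : D <= eps / 4 * INR n).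
  { replace D with (eps / 4 * (4 * D / eps)) by (field; lra). apply Rmult_le_compat_l; lra. }
  enough (lambda <= lambda - eta) by lra.
  apply (fekete_limit_le_of_tiling u Hu Hu0 (lambda + eta) (lambda - eta) D HD); [lra|].
  pose proof (pos_INR n).
  assert (2 * eta * INR L * INR n <= eps / 2 * INR n) by (apply Rmult_le_compat_r; lra).
  assert (eta * INR n <= eps / 4 * INR n) by (apply Rmult_le_compat_r; lra).
  fold n. rewrite mult_INR. nra.
Qed.

Theorem subadditive_limit_on_recurrent : exists l : R, forall eps : R, eps > 0 ->
  exists n_eps : nat, forall w, W w -> (length w >= n_eps)%nat ->
    Rabs (F w / INR (length w) - l) <= eps.
Proof.
  exists lambda. intros eps He.
  destruct (F_upper eps He) as [N1 HN1]. destruct (F_lower eps He) as [N2 HN2].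
  exists (S (Nat.max N1 N2)). intros w Hw Hlen.
  assert (HwR : 0 < INR (length w)) by (apply (lt_INR 0); lia).
  specialize (HN1 w Hw ltac:(lia)). specialize (HN2 w Hw ltac:(lia)).
  apply Rabs_le. split;
    [apply Rmult_le_reg_r with (INR (length w)) | apply Rmult_le_reg_l with (INR (length w))];
    try lra; unfold Rdiv; field_simplify; lra.
Qed.

End SubadditiveOnRecurrentLanguage.

Lemma in_W_infix alpha x y z : in_W alpha (x ++ y ++ z) -> y <> [] -> in_W alpha y.
Proof.
  intros [_ [theta [Htheta [k Hk]]]] Hy. split; [exact Hy|].
  exists theta. split; [exact Htheta|]. exists (k + Z.of_nat (length x))%Z. intros i Hi.
  specialize (Hk (length x + i)%nat).
  rewrite app_nth2, app_nth1, Nat.add_comm, Nat.add_sub in Hk by lia.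
  rewrite Hk by (rewrite !length_app; lia). f_equal. lia.
Qed.

Lemma in_W_lengths alpha n : (1 <= n)%nat -> exists w, in_W alpha w /\ length w = n.
Proof.
  intros Hn. set (f i := sturm alpha 0 (Z.of_nat i)). exists (map f (seq 0 n)).
  rewrite length_map, length_seq. split; [|reflexivity].
  split; [destruct n; [lia | discriminate]|].
  exists 0. split; [lra|]. exists 0%Z. intros i Hi.
  rewrite length_map, length_seq in Hi.
  rewrite (nth_indep _ false (f 0%nat)), map_nth, seq_nth
    by (rewrite ?length_map, ?length_seq; exact Hi).
  reflexivity.
Qed.

Theorem lemma4 (alpha : R)
  (Halpha : 0 < alpha < 1) (Hirr : irrational alpha)
  (Hbdd : exists C : R, forall n : nat, Rabs (IZR (cf_digit alpha n)) <= C)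
  (F : list bool -> R)
  (Fnonneg : forall w, in_W alpha w -> 0 <= F w)
  (Fsub : forall a b, in_W alpha a -> in_W alpha b -> in_W alpha (a ++ b) ->
          F (a ++ b) <= F a + F b) :
  exists l : R, forall eps : R, eps > 0 ->
    exists n_eps : nat, forall w, in_W alpha w -> (length w >= n_eps)%nat ->
      Rabs (F w / INR (length w) - l) <= eps.
Proof.
  destruct Hbdd as [C HC].
  assert (Hdigits : forall n, IZR (cf_digit alpha n) <= C)
    by (intro n; eapply Rle_trans; [apply Rle_abs | apply HC]).
  destruct (bounded_digits_badly_approximable alpha Halpha Hirr C Hdigits) as [c [Hc Hba]].
  destruct (in_W_linearly_recurrent alpha c Halpha Hc Hba) as [L [HL Hrec]].
  exact (subadditive_limit_on_recurrent (in_W alpha) (in_W_infix alpha) (in_W_lengths alpha)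
           L HL Hrec F Fnonneg Fsub).
Qed.
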